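(* Let $\mathcal{A}$ be a unital algebra generated by two unital subalgebras $\mathcal{A}_1,\mathcal{A}_2$. Let $\mathcal{I}_1$ (resp. $\mathcal{I}_2$) be an ideal of $\mathcal{A}_1$ (resp. $\mathcal{A}_2$) and $\mathcal{I}$ the ideal of $\mathcal{A}$ generated by $\mathcal{I}_1\cup \mathcal{I}_2$. Let $\tau: \mathcal{A}\to \mathbb{C}$ be a unital linear functional with $\mathcal{I}\subset \ker(\tau)$ and $\tau': \mathcal{I}\to \mathbb{C}$ a linear functional such that $(\mathcal{A}_1,\mathcal{I}_1)$ and $(\mathcal{A}_2,\mathcal{I}_2)$ are free of type $B$ in $(\mathcal{A},\tau,\mathcal{I},\tau')$. Then the pair $(\mathcal{I}_1,\mathcal{A}_2)$ is cyclically monotone with respect to $(\tau',\tau)$.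
   Context: Freeness of type $B$ in $(\mathcal{A},\tau,\mathcal{I},\tau')$ for $(\mathcal{A}_1,\mathcal{I}_1)$, $(\mathcal{A}_2,\mathcal{I}_2)$: $\mathcal{A}_1,\mathcal{A}_2$ are free w.r.t. $\tau$, and whenever $a_n\in\mathcal{A}_{i_n},\dots,a_1\in\mathcal{A}_{i_1}$, $v\in\mathcal{I}_h$, $b_1\in\mathcal{A}_{j_1},\dots,b_m\in\mathcal{A}_{j_m}$ with any two consecutive indices in $i_n,\dots,i_1,h,j_1,\dots,j_m$ different and all $a_r,b_s$ centered for $\tau$, $\tau'(a_n\cdots a_1vb_1\cdots b_m)=\tau(a_nb_m)\cdots\tau(a_1b_1)\tau'(v)$ if $n=m$ and $i_r=j_r$ for all $r$, and $=0$ otherwise. The pair $(\mathcal{I}_1,\mathcal{A}_2)$ is cyclically monotone w.r.t. $(\tau',\tau)$ if for all $a_1,\dots,a_n\in\mathcal{I}_1$ and $b_0,\dots,b_n\in\mathcal{A}_2$, $\tau'(b_0a_1b_1\cdots a_nb_n)=\tau'(a_1\cdots a_n)\tau(b_1)\cdots\tau(b_{n-1})\tau(b_0b_n)$. *)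

From mathcomp Require Import all_boot all_algebra.
From mathcomp Require Import reals.
From mathcomp.real_closed Require Export complex.
Set Implicit Arguments. Unset Strict Implicit. Unset Printing Implicit Defensive.
Import GRing.Theory.
Local Open Scope ring_scope.

Section Defs.
Variables (K : comNzRingType) (A : algType K).

Definition is_unital_subalg (S : A -> Prop) : Prop :=
  [/\ S 1,
      (forall (c : K) x y, S x -> S y -> S (c *: x + y)) &
      (forall x y, S x -> S y -> S (x * y))].

Definition generated_by (A1 A2 : A -> Prop) : Prop :=
  forall S : A -> Prop, is_unital_subalg S ->
    (forall x, A1 x -> S x) -> (forall x, A2 x -> S x) -> forall x, S x.

Definition is_ideal_of (B J : A -> Prop) : Prop :=
  [/\ (forall x, J x -> B x), J 0,
      (forall (c : K) x y, J x -> J y -> J (c *: x + y)) &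
      (forall b x, B b -> J x -> J (b * x) /\ J (x * b))].

Definition gen_ideal (I1 I2 : A -> Prop) : A -> Prop :=
  fun x => forall J : A -> Prop, is_ideal_of (fun _ => True) J ->
    (forall y, I1 y -> J y) -> (forall y, I2 y -> J y) -> J x.

(* f is linear on the subspace D (values of f outside D are irrelevant). *)
Definition linear_on (D : A -> Prop) (f : A -> K) : Prop :=
  forall (c : K) x y, D x -> D y -> f (c *: x + y) = c * f x + f y.

(* Index convention: false stands for 1 and true stands for 2. *)
Definition sel (X1 X2 : A -> Prop) (b : bool) : A -> Prop :=
  if b then X2 else X1.

Definition alternating (s : seq bool) : bool := sorted (fun x y => x != y) s.

Definition free_wrt (tau : A -> K) (A1 A2 : A -> Prop) : Prop :=
  forall n (a : 'I_n -> A) (i : 'I_n -> bool),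
    (0 < n)%N ->
    alternating [seq i k | k <- enum 'I_n] ->
    (forall k, sel A1 A2 (i k) (a k)) ->
    (forall k, tau (a k) = 0) ->
    tau (\prod_(k < n) a k) = 0.

(* (A1, I1), (A2, I2) are free of type B in (A, tau, I, tau').
   a k stands for a_{k+1}, ia k for i_{k+1}; b k for b_{k+1}, jb k for j_{k+1}. *)
Definition free_typeB (tau tau' : A -> K) (A1 I1 A2 I2 : A -> Prop) : Prop :=
  free_wrt tau A1 A2 /\
  forall n m (a : 'I_n -> A) (ia : 'I_n -> bool) (v : A) (h : bool)
         (b : 'I_m -> A) (jb : 'I_m -> bool),
    alternating ([seq ia (rev_ord k) | k <- enum 'I_n] ++
                 h :: [seq jb k | k <- enum 'I_m]) ->
    (forall k, sel A1 A2 (ia k) (a k)) ->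
    sel I1 I2 h v ->
    (forall k, sel A1 A2 (jb k) (b k)) ->
    (forall k, tau (a k) = 0) ->
    (forall k, tau (b k) = 0) ->
    let w := (\prod_(k < n) a (rev_ord k)) * v * (\prod_(k < m) b k) in
    (forall e : n = m, (forall k, ia k = jb (cast_ord e k)) ->
       tau' w = (\prod_(k < n) tau (a (rev_ord k) * b (cast_ord e (rev_ord k))))
                * tau' v) /\
    (~ (exists e : n = m, forall k, ia k = jb (cast_ord e k)) -> tau' w = 0).

(* (I1, A2) is cyclically monotone w.r.t. (tau', tau).
   a k stands for a_{k+1} (k < n), b k for b_k (k <= n). *)
Definition cyclically_monotone (tau' tau : A -> K) (I1 A2 : A -> Prop) : Prop :=
  forall n (a : 'I_n -> A) (b : 'I_n.+1 -> A),
    (0 < n)%N ->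
    (forall k, I1 (a k)) -> (forall k, A2 (b k)) ->
    tau' (b ord0 * \prod_(k < n) (a k * b (lift ord0 k))) =
      tau' (\prod_(k < n) a k) * (\prod_(k < n.+1 | (0 < k < n)%N) tau (b k))
      * tau (b ord0 * b ord_max).

End Defs.

From mathcomp Require Import all_boot all_algebra ring.
From mathcomp Require Import reals.
From mathcomp.real_closed Require Import complex.
Set Implicit Arguments. Unset Strict Implicit. Unset Printing Implicit Defensive.
Import GRing.Theory.
Local Open Scope ring_scope.

(* Write b = tau b *: 1 + cen b.  Centering the inner b_k of
   b_0 a_1 b_1 ... a_n b_n from right to left, the scalar parts merge
   neighbouring a's into one element of the ideal I1 and contribute the factors
   tau b_k.  Every term containing some cen b_k has the form x c w y with x, y
   in A2, c in I1 and w an alternating centered word of even length >= 2 (tau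
   kills I1, so the a's are centered); centering x and y as well, freeness of
   type B makes it vanish, as the words on the two sides of c have different
   lengths.  What is left, tau' (b_0 c b_n) = tau (b_0 b_n) tau' c, is the case
   of words of length at most one. *)

Lemma big_ord_recr_inord (R : nzRingType) p (F : 'I_p.+1 -> R) :
  \prod_(k < p.+1) F k = \prod_(i < p) F (inord i) * F (inord p).
Proof.
rewrite big_ord_recr /=; congr (_ * _); last by rewrite -[ord_max]inord_val.
by apply: eq_bigr => i _; rewrite -[widen_ord _ i]inord_val.
Qed.

Lemma big_ord_interior (R : nzRingType) p (F : 'I_p.+2 -> R) :
  \prod_(k < p.+2 | (0 < k < p.+1)%N) F k =
  \prod_(i < p) F (lift ord0 (inord i)).
Proof.
rewrite big_mkcond big_ord_recl /= mul1r big_ord_recr /=.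
rewrite /bump /= ltnn mulr1; apply: eq_bigr => i _.
by rewrite ltnS ltn_ord -[widen_ord _ i]inord_val.
Qed.

Lemma alternating_odd_iota k l : alternating [seq odd i | i <- iota k l].
Proof.
elim: l k => [|[|l] IH] k //; have := IH k.+1.
by rewrite /alternating /= => ->; rewrite andbT; case: odd.
Qed.

Lemma alternating_odd_around n m :
  alternating ([seq ~~ odd (rev_ord k : 'I_n) | k <- enum 'I_n] ++
               false :: [seq ~~ odd (val k) | k <- enum 'I_m]).
Proof.
have shift j : [seq odd i | i <- iota n j] = [seq odd (n + i) | i <- iota 0 j].
  by rewrite -[n in iota n]addn0 iotaDl -map_comp.
have oddnn : odd (n + n) = false by rewrite addnn odd_double.
suff -> : [seq ~~ odd (rev_ord k : 'I_n) | k <- enum 'I_n] ++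
          false :: [seq ~~ odd (val k) | k <- enum 'I_m] =
          [seq odd i | i <- iota n (n + m.+1)] by apply: alternating_odd_iota.
rewrite iotaD map_cat shift -val_enum_ord -map_comp; congr (_ ++ _).
  apply: eq_map => k /=.
  by rewrite oddB ?ltn_ord //= oddD; case: (odd n); case: (odd k).
rewrite /= oddnn; congr (_ :: _).
rewrite -[(n + n).+1]addn0 iotaDl -map_comp -val_enum_ord -map_comp.
by apply: eq_map => k /=; rewrite oddD oddnn.
Qed.

Section GeneratedIdeal.
Variables (K : comNzRingType) (A : algType K) (I1 I2 : A -> Prop).
Local Notation J := (gen_ideal I1 I2).

Lemma gen_ideal_l x : I1 x -> J x.
Proof. by move=> I1x S _ subS _; apply: subS. Qed.

Lemma gen_idealMl y x : J x -> J (y * x).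
Proof.
by move=> Jx S idS S1 S2; case: (idS) => _ _ _ /(_ y x I (Jx S idS S1 S2)) [].
Qed.

Lemma gen_idealMr y x : J x -> J (x * y).
Proof.
by move=> Jx S idS S1 S2; case: (idS) => _ _ _ /(_ y x I (Jx S idS S1 S2)) [].
Qed.

End GeneratedIdeal.

Section FreeTypeB.
Variables (K : comNzRingType) (A : algType K) (A1 A2 I1 I2 : A -> Prop).
Variables (tau tau' : A -> K).
Hypotheses (A2_subalg : is_unital_subalg A2) (I1_ideal : is_ideal_of A1 I1).
Hypotheses (tau_lin : linear_on (fun _ => True) tau) (tau1 : tau 1 = 1).
Hypotheses (tau_J : forall x, gen_ideal I1 I2 x -> tau x = 0).
Hypotheses (tau'_lin : linear_on (gen_ideal I1 I2) tau').
Hypothesis (freeB : free_typeB tau tau' A1 I1 A2 I2).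
Local Notation J := (gen_ideal I1 I2).

Lemma I1_subA1 x : I1 x -> A1 x.
Proof. by case: I1_ideal => sub _ _ _; apply: sub. Qed.

Lemma I1_mul x y : I1 x -> I1 y -> I1 (x * y).
Proof.
by case: I1_ideal => _ _ _ mulI Ix Iy; exact: (mulI y x (I1_subA1 Iy) Ix).2.
Qed.

Lemma tau_I1 x : I1 x -> tau x = 0.
Proof. by move=> Ix; apply: tau_J; exact: gen_ideal_l Ix. Qed.

Definition cen x := x - tau x *: 1.

Lemma cenE x : cen x = - tau x *: 1 + x.
Proof. by rewrite scaleNr addrC. Qed.

Lemma split_cen x : x = tau x *: 1 + cen x.
Proof. by rewrite addrC subrK. Qed.

Lemma tau_cen x : tau (cen x) = 0.
Proof. by rewrite cenE tau_lin // tau1 mulr1 addNr. Qed.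

Lemma A2_cen x : A2 x -> A2 (cen x).
Proof. by case: A2_subalg => A2_1 A2_lin _ A2x; rewrite cenE; apply: A2_lin. Qed.

Lemma tau_cenMl x y : tau (cen x * y) = tau (x * y) - tau x * tau y.
Proof. by rewrite cenE mulrDl -scalerAl mul1r tau_lin // mulNr addrC. Qed.

Lemma tau_cenMr x y : tau (x * cen y) = tau (x * y) - tau x * tau y.
Proof.
by rewrite cenE mulrDr -scalerAr mulr1 tau_lin // mulNr addrC mulrC.
Qed.

Lemma tau'_cenl y z : J z -> tau' (y * z) = tau' (cen y * z) + tau y * tau' z.
Proof.
move=> Jz; rewrite {1}[y]split_cen mulrDl -scalerAl mul1r.
by rewrite tau'_lin 1?addrC //; exact: gen_idealMl.
Qed.

Lemma tau'_cenr x y z : J x ->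
  tau' (x * (y * z)) = tau' (x * (cen y * z)) + tau y * tau' (x * z).
Proof.
move=> Jx; rewrite {1}[y]split_cen mulrDl mulrDr -scalerAl -scalerAr mul1r.
by rewrite tau'_lin 1?addrC //; exact: gen_idealMr.
Qed.

(* s_0 in A2, s_1 in A1, s_2 in A2, ..., all in the kernel of tau. *)
Definition alt_centered (s : seq A) : Prop :=
  forall i, (i < size s)%N -> sel A1 A2 (~~ odd i) s`_i /\ tau s`_i = 0.

Lemma prod_rev_nth (s : seq A) :
  \prod_(k < size s) s`_(rev_ord k) = \prod_(x <- rev s) x.
Proof.
rewrite (big_nth 0) size_rev big_mkord; apply: eq_bigr => k _.
by rewrite nth_rev.
Qed.

(* The left word ls is listed from v outwards. *)
Lemma free_typeB_seq ls v rs :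
  alt_centered ls -> I1 v -> alt_centered rs ->
  let w := \prod_(x <- rev ls) x * v * \prod_(y <- rs) y in
  (size ls = size rs ->
     tau' w = \prod_(k < size ls) tau (ls`_k * rs`_k) * tau' v) /\
  (size ls != size rs -> tau' w = 0).
Proof.
move=> ls_c I1v rs_c w.
have Ew : w = \prod_(k < size ls) ls`_(rev_ord k) * v *
              \prod_(k < size rs) rs`_k.
  by rewrite /w prod_rev_nth; congr (_ * _); rewrite (big_nth 0) big_mkord.
have [_ /(_ (size ls) (size rs) (fun k => ls`_k) (fun k => ~~ odd k) v false
           (fun k => rs`_k) (fun k => ~~ odd k))] := freeB.
case/(_ (alternating_odd_around _ _) (fun k => (ls_c k (ltn_ord k)).1) I1v
        (fun k => (rs_c k (ltn_ord k)).1) (fun k => (ls_c k (ltn_ord k)).2)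
        (fun k => (rs_c k (ltn_ord k)).2)) => match_w mismatch_w.
rewrite Ew; split=> [e | /eqP ne]; last by apply: mismatch_w; case.
by rewrite (match_w e) // [in RHS](reindex_inj rev_ord_inj).
Qed.

Lemma alt_centered0 : alt_centered [::].
Proof. by []. Qed.

Lemma alt_centered_cen1 x : A2 x -> alt_centered [:: cen x].
Proof. by move=> A2x [|i] //= _; split; [apply: A2_cen | apply: tau_cen]. Qed.

Lemma alt_centered_rcons w x : alt_centered w -> ~~ odd (size w) -> A2 x ->
  alt_centered (rcons w (cen x)).
Proof.
move=> wc even_w A2x i; rewrite size_rcons ltnS leq_eqVlt nth_rcons.
case: ltngtP => [i_lt _|//|-> _]; first exact: wc.
by rewrite even_w; split; [apply: A2_cen | apply: tau_cen].
Qed.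

Lemma alt_centered_cons2 x v w : A2 x -> I1 v -> alt_centered w ->
  alt_centered (cen x :: v :: w).
Proof.
move=> A2x I1v wc [|[|i]] /=; first by split; [apply: A2_cen | apply: tau_cen].
  by split; [apply: I1_subA1 | apply: tau_I1].
by rewrite negbK ltnS ltnS; apply: wc.
Qed.

Lemma tau'_I1_word v rs : I1 v -> alt_centered rs -> size rs != 0%N ->
  tau' (v * \prod_(y <- rs) y) = 0.
Proof.
move=> I1v rs_c rs_ne0.
have := (free_typeB_seq alt_centered0 I1v rs_c).2.
by rewrite eq_sym big_nil mul1r; apply.
Qed.

Lemma tau'_cen_I1_word x v rs : A2 x -> I1 v -> alt_centered rs ->
  size rs != 1%N -> tau' (cen x * v * \prod_(y <- rs) y) = 0.
Proof.
move=> A2x I1v rs_c rs_ne1.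
have := (free_typeB_seq (alt_centered_cen1 A2x) I1v rs_c).2.
by rewrite eq_sym big_seq1; apply.
Qed.

Lemma tau'_cen_I1_cen x v y : A2 x -> I1 v -> A2 y ->
  tau' (cen x * v * cen y) = tau (cen x * cen y) * tau' v.
Proof.
move=> A2x I1v A2y.
have := (free_typeB_seq (alt_centered_cen1 A2x) I1v (alt_centered_cen1 A2y)).1.
by rewrite !big_seq1 big_ord1; apply.
Qed.

Lemma tau'_A2_I1_word x v rs : A2 x -> I1 v -> alt_centered rs ->
  (1 < size rs)%N -> tau' (x * v * \prod_(y <- rs) y) = 0.
Proof.
move=> A2x I1v rs_c rs_gt1.
have Jw : J (v * \prod_(y <- rs) y).
  by apply: gen_idealMr; exact: gen_ideal_l I1v.
rewrite -mulrA tau'_cenl // mulrA tau'_cen_I1_word ?tau'_I1_word //.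
- by rewrite mulr0 addr0.
- by rewrite -lt0n ltnW.
- by rewrite neq_ltn rs_gt1 orbT.
Qed.

Lemma tau'_A2_I1_A2 x v y : A2 x -> I1 v -> A2 y ->
  tau' (x * v * y) = tau (x * y) * tau' v.
Proof.
move=> A2x I1v A2y; have Jv : J v := gen_ideal_l I1v.
have := tau'_cenr y 1 (gen_idealMl x Jv); rewrite !mulr1 => ->.
rewrite -mulrA !(tau'_cenl x) //; last exact: gen_idealMr.
have := tau'_I1_word I1v (alt_centered_cen1 A2y); rewrite big_seq1 => -> //.
have := tau'_cen_I1_word A2x I1v alt_centered0; rewrite big_nil mulr1 => -> //.
rewrite mulrA tau'_cen_I1_cen // tau_cenMl tau_cenMr tau_cen.
ring.
Qed.

Lemma tau'_A2_I1_word_A2 x v w y : A2 x -> I1 v -> alt_centered w ->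
  ~~ odd (size w) -> (0 < size w)%N -> A2 y ->
  tau' (x * v * \prod_(z <- w) z * y) = 0.
Proof.
move=> A2x I1v wc even_w w_gt0 A2y.
have Jxvw : J (x * v * \prod_(z <- w) z).
  by apply: gen_idealMr; apply: gen_idealMl; exact: gen_ideal_l I1v.
have := tau'_cenr y 1 Jxvw; rewrite !mulr1 => ->.
have -> : x * v * \prod_(z <- w) z * cen y =
          x * v * \prod_(z <- rcons w (cen y)) z.
  by rewrite -cats1 big_cat big_seq1 mulrA.
rewrite !tau'_A2_I1_word ?size_rcons ?mulr0 ?addr0 //.
- by move: even_w w_gt0; case: (size w) => [|[]].
- exact: alt_centered_rcons.
Qed.

Section Prefix.
Variables (a b : nat -> A).
Hypotheses (I1a : forall i, I1 (a i)) (A2b : forall i, A2 (b i)).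

Lemma J_prefix x p : J (x * \prod_(i < p) (a i * b i) * a p).
Proof. by apply: gen_idealMl; exact: gen_ideal_l (I1a p). Qed.

Lemma prefix_recr x p y :
  x * \prod_(i < p.+1) (a i * b i) * y =
  x * \prod_(i < p) (a i * b i) * a p * (b p * y).
Proof. by rewrite big_ord_recr /= !mulrA. Qed.

Lemma tau'_prefix_word_vanish p x v w y : A2 x -> I1 v -> alt_centered w ->
  ~~ odd (size w) -> (0 < size w)%N -> A2 y ->
  tau' (x * \prod_(i < p) (a i * b i) * v * \prod_(z <- w) z * y) = 0.
Proof.
move=> A2x; elim: p v w => [|p IH] v w I1v wc even_w w_gt0 A2y.
  by rewrite big_ord0 mulr1 tau'_A2_I1_word_A2.
rewrite -[_ * v * _ * y]mulrA -[_ * v * _]mulrA prefix_recr.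
rewrite tau'_cenr; last exact: J_prefix.
rewrite !mulrA.
have := IH (a p) (cen (b p) :: v :: w); rewrite !big_cons !mulrA => -> //.
- by rewrite -[_ * a p * v]mulrA IH ?mulr0 ?addr0 //; apply: I1_mul.
- exact: alt_centered_cons2.
- by rewrite /= negbK.
Qed.

Lemma tau'_prefix p x v y : A2 x -> I1 v -> A2 y ->
  tau' (x * \prod_(i < p) (a i * b i) * v * y) =
  tau' (\prod_(i < p) a i * v) * \prod_(i < p) tau (b i) * tau (x * y).
Proof.
move=> A2x; elim: p v => [|p IH] v I1v A2y.
  by rewrite !big_ord0 mulr1 mul1r tau'_A2_I1_A2 // mulr1 mulrC.
rewrite -[_ * v * y]mulrA prefix_recr tau'_cenr; last exact: J_prefix.
have := tau'_prefix_word_vanish p (w := [:: cen (b p); v]) A2x (I1a p).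
rewrite !big_cons big_nil mulr1 !mulrA => -> //; last first.
  exact/alt_centered_cons2/alt_centered0.
rewrite -[_ * a p * v]mulrA IH //; last exact: I1_mul.
rewrite !big_ord_recr /= -[\prod_(i < p) a i * a p * v]mulrA.
ring.
Qed.

End Prefix.

End FreeTypeB.

Theorem proposition2p17 (R : realType) (A : algType R[i])
    (A1 A2 I1 I2 : A -> Prop) (tau tau' : A -> R[i]) :
  is_unital_subalg A1 -> is_unital_subalg A2 ->
  generated_by A1 A2 ->
  is_ideal_of A1 I1 -> is_ideal_of A2 I2 ->
  linear_on (fun _ => True) tau -> tau 1 = 1 ->
  (forall x, gen_ideal I1 I2 x -> tau x = 0) ->
  linear_on (gen_ideal I1 I2) tau' ->
  free_typeB tau tau' A1 I1 A2 I2 ->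
  cyclically_monotone tau' tau I1 A2.
Proof.
move=> _ A2_subalg _ I1_ideal _ tau_lin tau1 tau_J tau'_lin freeB.
move=> [//|p] a b _ I1a A2b.
rewrite !big_ord_recr_inord.
have -> : lift ord0 (inord p) = ord_max :> 'I_p.+2.
  by apply/val_inj; rewrite /= inordK.
rewrite big_ord_interior !mulrA.
exact: (tau'_prefix A2_subalg I1_ideal tau_lin tau1 tau_J tau'_lin freeB
          (a := fun i => a (inord i)) (b := fun i => b (lift ord0 (inord i)))).
Qed.
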